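(* Let $\mathfrak g$ be a complex non-model filiform Lie algebra of dimension $n$, with invariant $z_2=z_2(\mathfrak g)$, and put $z_2^*=n+1-z_2$. Then: (i) for all integers $k,\ell,k',\ell'\ge 1$ with $k\le k'$ and $\ell\le \ell'$ one has $\dim[C^{k'}\mathfrak g,C^{\ell'}\mathfrak g]\le \dim[C^k\mathfrak g,C^\ell\mathfrak g]$; (ii) $[C^{z_2^*}\mathfrak g,C^{z_2^*}\mathfrak g]=\{0\}$; (iii) for every $k\ge 2$, $[C^k\mathfrak g,C^k\mathfrak g]=[C^k\mathfrak g,C^{k+1}\mathfrak g]$; consequently $\mathrm{hp}_{\mathfrak g,k,k}=\mathrm{hp}_{\mathfrak g,k+1,k}=\mathrm{hp}_{\mathfrak g,k,k+1}$ for all $k\ge 2$.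
   Context: All Lie algebras are over $\mathbb C$. The lower central series of a Lie algebra $\mathfrak g$ is $C^1\mathfrak g=\mathfrak g$, $C^k\mathfrak g=[C^{k-1}\mathfrak g,\mathfrak g]$ for $k\ge2$. A Lie algebra $\mathfrak g$ is filiform if $\dim\mathfrak g=n\ge 2$ and $\dim C^k\mathfrak g=n-k$ for $2\le k\le n$. The model filiform Lie algebra of dimension $n$ has a basis $e_1,\dots,e_n$ with $[e_1,e_h]=e_{h-1}$ for $3\le h\le n$ and all other brackets of basis vectors zero; ''non-model'' means not isomorphic to it (so $n\ge5$). An adapted basis of a filiform $\mathfrak g$ is a basis $\{e_1,\dots,e_n\}$ with $[e_1,e_h]=e_{h-1}$ ($3\le h\le n$), $[e_2,e_h]=0$ ($1\le h\le n$), $[e_3,e_h]=0$ ($2\le h\le n$); every filiform Lie algebra has one, and then $C^k\mathfrak g=\langle e_2,\dots,e_{n-k+1}\rangle$ for $2\le k\le n-1$. The invariant $z_2(\mathfrak g)=\max\{k\in\mathbb N: C^{n-k+1}\mathfrak g \text{ is abelian}\}$; equivalently, for any adapted basis, $z_2=\min\{k\ge4:[e_k,e_{k+1}]\ne0\}$. The Hilbert polynomial of $\mathfrak g$ is $\mathrm{HP}_{\mathfrak g}(t,s)=\sum_{k,\ell\ge1}\dim[C^k\mathfrak g,C^\ell\mathfrak g]\,t^ks^\ell\in\mathbb Z[t,s]$, and $\mathrm{hp}_{\mathfrak g,k,\ell}:=\dim[C^k\mathfrak g,C^\ell\mathfrak g]$ denotes the coefficient of $t^ks^\ell$. *)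

From HB Require Import structures.
From mathcomp Require Import all_boot all_order all_algebra.
From mathcomp Require Import reals.
From mathcomp Require Import complex.
Set Implicit Arguments. Unset Strict Implicit. Unset Printing Implicit Defensive.
Import Order.TTheory GRing.Theory Num.Theory.
Local Open Scope ring_scope.


Section Lie.
Variables (F : fieldType) (V : vectType F) (br : V -> V -> V).

Definition is_lie_bracket : Prop :=
  [/\ forall (a : F) x y z, br (a *: x + y) z = a *: br x z + br y z,
      forall (a : F) x y z, br z (a *: x + y) = a *: br z x + br z y,
      forall x, br x x = 0
    & forall x y z, br x (br y z) + br y (br z x) + br z (br x y) = 0].

(* [U, W] = span of all brackets [u, w], u in U, w in W (by bilinearity,
   the span of the brackets of basis vectors). *)
Definition brsp (U W : {vspace V}) : {vspace V} :=
  <<[seq br u w | u <- vbasis U, w <- vbasis W]>>%VS.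

(* Lower central series: C^1 = g, C^k = [C^(k-1), g]; C^0 := g by convention. *)
Fixpoint lcs (k : nat) : {vspace V} :=
  match k with
  | 0 | 1 => fullv
  | k'.+1 => brsp (lcs k') fullv
  end.

Definition filiform (n : nat) : Prop :=
  [/\ (2 <= n)%N, \dim (fullv : {vspace V}) = n
    & forall k, (2 <= k <= n)%N -> \dim (lcs k) = (n - k)%N].

Definition is_model (n : nat) : Prop :=
  exists e : nat -> V,
    [/\ basis_of (fullv : {vspace V}) [seq e i | i <- iota 1 n]
      & forall i j, (1 <= i <= n)%N -> (1 <= j <= n)%N ->
          br (e i) (e j) =
            if (i == 1%N) && (3 <= j)%N then e j.-1
            else if (j == 1%N) && (3 <= i)%N then - e i.-1
            else 0].

Definition abelian_sub (U : {vspace V}) : Prop := brsp U U = 0%VS.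

Definition is_z2 (n z : nat) : Prop :=
  abelian_sub (lcs (n.+1 - z)) /\
  forall k, abelian_sub (lcs (n.+1 - k)) -> (k <= z)%N.

Definition hp (k l : nat) : nat := \dim (brsp (lcs k) (lcs l)).
End Lie.

From HB Require Import structures.
From mathcomp Require Import all_boot all_order all_algebra.
From mathcomp Require Import reals.
From mathcomp Require Import complex.
Set Implicit Arguments. Unset Strict Implicit. Unset Printing Implicit Defensive.
Import Order.TTheory GRing.Theory Num.Theory.
Local Open Scope ring_scope.

(* In a filiform algebra C^(k+1) has codimension one in C^k for 2 <= k < n, so
   C^k = C^(k+1) + <x> for some x in C^k; since [x, x] = 0, every bracket of two
   elements of C^k already lies in [C^k, C^(k+1)]. Part (i) only uses that the
   lower central series decreases and that [_, _] is monotone, and part (ii) is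
   the defining property of z_2. *)

Section VectorSpaces.
Variables (F : fieldType) (V : vectType F).

Lemma addv_line_codim1 (B A : {vspace V}) :
  (B <= A)%VS -> \dim A = (\dim B).+1 -> exists2 x, x \in A & A = (B + <[x]>)%VS.
Proof.
move=> BA dimA.
have [/allP AB | /allPn [x /vbasis_mem xA xB]] := boolP (all (mem B) (vbasis A)).
  have : (A <= B)%VS by rewrite -(span_basis (vbasisP A)); apply/span_subvP.
  by move/dimvS; rewrite dimA ltnn.
have Bx_A : (B + <[x]> <= A)%VS by rewrite subv_add BA -memvE xA.
have dimBx : (\dim B < \dim (B + <[x]>))%N.
  rewrite (ltn_leqif (dimv_leqif_eq (addvSl B <[x]>))); apply: contra xB => /eqP ->.
  exact: (subvP (addvSr _ _)) _ (memv_line x).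
by exists x => //; apply/eqP; rewrite eq_sym eqEdim Bx_A dimA.
Qed.

End VectorSpaces.

Section BracketSpans.
Variables (F : fieldType) (V : vectType F) (br : V -> V -> V).
Hypothesis br_linearl : forall (a : F) x y z, br (a *: x + y) z = a *: br x z + br y z.
Hypothesis br_linearr : forall (a : F) x y z, br z (a *: x + y) = a *: br z x + br z y.
Hypothesis br_alt : forall x, br x x = 0.

Lemma br0l z : br 0 z = 0.
Proof.
have := br_linearl 1 0 0 z; rewrite !scale1r !addr0 => e.
by apply: (@addrI _ (br 0 z)); rewrite addr0 -e.
Qed.

Lemma br0r z : br z 0 = 0.
Proof.
have := br_linearr 1 0 0 z; rewrite !scale1r !addr0 => e.
by apply: (@addrI _ (br z 0)); rewrite addr0 -e.
Qed.

Lemma brDl x y z : br (x + y) z = br x z + br y z.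
Proof. by have := br_linearl 1 x y z; rewrite !scale1r. Qed.

Lemma brDr x y z : br z (x + y) = br z x + br z y.
Proof. by have := br_linearr 1 x y z; rewrite !scale1r. Qed.

Lemma brZl a x z : br (a *: x) z = a *: br x z.
Proof. by have := br_linearl a x 0 z; rewrite !addr0 br0l addr0. Qed.

Lemma brZr a x z : br z (a *: x) = a *: br z x.
Proof. by have := br_linearr a x 0 z; rewrite !addr0 br0r addr0. Qed.

Lemma br_anti x y : br x y = - br y x.
Proof.
apply/eqP; rewrite -addr_eq0.
by have := br_alt (x + y); rewrite brDl !brDr !br_alt add0r addr0 => ->.
Qed.

Lemma memv_brsp (U W : {vspace V}) u w :
  u \in U -> w \in W -> br u w \in brsp br U W.
Proof.
move=> uU wW; rewrite (coord_vbasis uU) (coord_vbasis wW).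
rewrite (big_morph (br^~ _) (fun x y => brDl x y _) (br0l _)); apply: rpred_sum => i _.
rewrite brZl (big_morph (br _) (fun x y => brDr x y _) (br0r _)).
apply/rpredZ/rpred_sum => j _.
rewrite brZr; apply/rpredZ/memv_span/allpairs_f; by apply: mem_nth; rewrite size_tuple.
Qed.

Lemma brspP (U W X : {vspace V}) :
  (forall u w, u \in U -> w \in W -> br u w \in X) -> (brsp br U W <= X)%VS.
Proof.
move=> H; apply/span_subvP => z /allpairsP [[u w] [/= uU wW ->]].
by apply: H; apply: vbasis_mem.
Qed.

Lemma brspS (U1 U2 W1 W2 : {vspace V}) :
  (U1 <= U2)%VS -> (W1 <= W2)%VS -> (brsp br U1 W1 <= brsp br U2 W2)%VS.
Proof.
move=> /subvP sU /subvP sW; apply: brspP => u w uU wW.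
by apply: memv_brsp; [apply: sU | apply: sW].
Qed.

Lemma brspC (U W : {vspace V}) : brsp br U W = brsp br W U.
Proof.
by apply/eqP; rewrite eqEsubv; apply/andP; split; apply: brspP => u w uU wW;
  rewrite br_anti rpredN memv_brsp.
Qed.

Lemma brsp0l (W : {vspace V}) : brsp br 0 W = 0%VS.
Proof.
apply/eqP; rewrite -subv0; apply: brspP => u w.
by rewrite memv0 => /eqP -> _; rewrite br0l mem0v.
Qed.

Lemma brsp_addv_line (A B : {vspace V}) x :
  (B <= A)%VS -> x \in A -> A = (B + <[x]>)%VS -> brsp br A A = brsp br A B.
Proof.
move=> BA xA defA; apply/eqP; rewrite eqEsubv (brspS (subvv A) BA) andbT.
apply: brspP => u w uA wA.
have /memv_addP [w' w'B [_ /vlineP [b ->] ->]] : w \in (B + <[x]>)%VS by rewrite -defA.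
rewrite brDr brZr; apply: rpredD; first exact: memv_brsp.
apply: rpredZ.
have /memv_addP [u' u'B [_ /vlineP [a ->] ->]] : u \in (B + <[x]>)%VS by rewrite -defA.
by rewrite brDl brZl br_alt scaler0 addr0 br_anti rpredN memv_brsp.
Qed.

Lemma lcsS k : (lcs br k.+1 <= lcs br k)%VS.
Proof.
elim: k => [|[|k] IH] //; first exact: subvf.
exact: brspS.
Qed.

Lemma lcs_antimono k k' : (k <= k')%N -> (lcs br k' <= lcs br k)%VS.
Proof.
move=> /subnK <-; elim: (k' - k)%N => [|m IH]; first exact: subvv.
exact: subv_trans (lcsS _) IH.
Qed.

Lemma hp_antimono k l k' l' :
  (k <= k')%N -> (l <= l')%N -> (hp br k' l' <= hp br k l)%N.
Proof. by move=> kk ll; apply/dimvS/brspS; apply: lcs_antimono. Qed.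

Section Filiform.
Variable n : nat.
Hypothesis filiform_br : filiform br n.

Lemma filiform_lcs_codim1 k : (2 <= k < n)%N ->
  exists2 x, x \in lcs br k & lcs br k = (lcs br k.+1 + <[x]>)%VS.
Proof.
case: filiform_br => _ _ dim_lcs /andP [k2 kn].
apply: addv_line_codim1 (lcsS k) _.
have dim_k : \dim (lcs br k) = (n - k)%N by rewrite dim_lcs // k2 ltnW.
have dim_k1 : \dim (lcs br k.+1) = (n - k.+1)%N by rewrite dim_lcs // leqW.
by rewrite dim_k dim_k1 subnS prednK // subn_gt0.
Qed.

Lemma filiform_lcs_eq0 k : (n <= k)%N -> lcs br k = 0%VS.
Proof.
case: filiform_br => n2 _ dim_lcs nk.
apply/eqP; rewrite -subv0; apply: subv_trans (lcs_antimono nk) _.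
by rewrite subv0 -dimv_eq0 (dim_lcs n) ?subnn // n2 leqnn.
Qed.

Lemma filiform_brsp_lcsS k : (2 <= k)%N ->
  brsp br (lcs br k) (lcs br k) = brsp br (lcs br k) (lcs br k.+1).
Proof.
move=> k2; have [kn | nk] := ltnP k n.
  have [x xk defk] : exists2 x, x \in lcs br k & lcs br k = (lcs br k.+1 + <[x]>)%VS.
    by apply: filiform_lcs_codim1; rewrite k2.
  exact: brsp_addv_line (lcsS k) xk defk.
by rewrite filiform_lcs_eq0 // !brsp0l.
Qed.

End Filiform.

End BracketSpans.

Theorem mainTheorem1 (R : realType) (V : vectType R[i]) (br : V -> V -> V)
  (n z2 : nat) :
  is_lie_bracket br -> filiform br n -> ~ is_model br n -> is_z2 br n z2 ->
  let z2s := (n.+1 - z2)%N in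
  [/\ (forall k l k' l' : nat, (1 <= k)%N -> (1 <= l)%N -> (k <= k')%N -> (l <= l')%N ->
         (hp br k' l' <= hp br k l)%N),
      brsp br (lcs br z2s) (lcs br z2s) = 0%VS
    & forall k : nat, (2 <= k)%N ->
        brsp br (lcs br k) (lcs br k) = brsp br (lcs br k) (lcs br k.+1) /\
        hp br k k = hp br k.+1 k /\ hp br k k = hp br k k.+1].
Proof.
move=> [linl linr alt _] fil _ [abelian_z2 _] z2s; split.
- by move=> k l k' l' _ _; apply: hp_antimono.
- exact: abelian_z2.
move=> k k2; have E := filiform_brsp_lcsS linl linr alt fil k2.
by rewrite /hp E (brspC linl linr alt (lcs br k.+1)).
Qed.
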